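(* Let $G$ be a finite group such that $|Z(G)|$ has at least two distinct prime divisors. Then the difference graph $\mathcal{D}(G)$ is connected if and only if $G$ is not isomorphic to $\mathbb{Z}_{pq}$ for primes $p,q$. Moreover, when $\mathcal{D}(G)$ is connected, its diameter is at most $6$.
   Context: For a finite group $G$ with identity $e$: the intersection power graph $\mathcal{G}_I(G)$ has vertex set $G$, two distinct non-identity vertices $x,y$ being adjacent iff $\langle x\rangle\cap\langle y\rangle\neq\{e\}$, and $e$ being adjacent to every other vertex. The power graph $\mathcal{P}(G)$ has vertex set $G$, two distinct vertices being adjacent iff one is a power of the other. The difference graph $\mathcal{D}(G)$ is the graph on vertex set $G$ with edge set $E(\mathcal{G}_I(G))\setminus E(\mathcal{P}(G))$, with all isolated vertices removed. $Z(G)$ denotes the center of $G$. *)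

From mathcomp Require Import all_boot all_order all_fingroup all_solvable all_algebra.
Set Implicit Arguments. Unset Strict Implicit. Unset Printing Implicit Defensive.
Local Open Scope group_scope.

Section Graphs.
Variable gT : finGroupType.
Variable G : {group gT}.

Definition ipg_adj (x y : gT) : bool :=
  [&& x \in G, y \in G, x != y &
      [|| x == 1, y == 1 | <[x]> :&: <[y]> != 1]].

Definition pg_adj (x y : gT) : bool :=
  [&& x \in G, y \in G, x != y & (x \in <[y]>) || (y \in <[x]>)].

Definition D_adj (x y : gT) : bool := ipg_adj x y && ~~ pg_adj x y.

Definition D_vert : {set gT} := [set x in G | [exists y, D_adj x y]].

Definition D_connected : bool :=
  (D_vert != set0) &&
  [forall x in D_vert, forall y in D_vert, connect D_adj x y].

Definition D_diam_le (n : nat) : Prop :=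
  forall x y, x \in D_vert -> y \in D_vert ->
    exists s : seq gT, [/\ size s <= n, path D_adj x s & last x s = y].
End Graphs.

(* Pick central elements a, b of distinct prime orders p, q and let c = ab, of
   order pq.  Every vertex x of D(G) is within distance 2 of c.  If <x> contains
   exactly one of a, b, then x ~ c, since an element of non-trivial, non-prime
   order in <c> generates <c>.  If <x> contains neither, take g of prime order in
   <x> and the one of a, b whose order differs from #[g]; say a: then ga is a
   common neighbour of x and c.  If <x> contains both, a neighbour y of x has a
   p- or p'-part h outside <x>, and h, or h times the one of a, b of order prime
   to #[h], is a common neighbour.  So D(G) has diameter at most 4, and it is
   non-empty as soon as G <> <c>.  Conversely, in a cyclic group of order pq
   every non-trivial element of non-prime order generates the whole group, so
   D(G) is empty. *)

From mathcomp Require Import all_boot all_order all_fingroup all_solvable all_algebra.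
Set Implicit Arguments. Unset Strict Implicit. Unset Printing Implicit Defensive.
Local Open Scope group_scope.

Lemma dvdn_mul_primes_nonprime p q n :
  prime p -> prime q -> n %| p * q -> n != 1%N -> ~~ prime n -> n = (p * q)%N.
Proof.
move=> pr_p pr_q dvd_n n_neq1 n_nprime.
have n_gt1 : (1 < n)%N.
  by rewrite ltn_neqAle eq_sym n_neq1 (dvdn_gt0 _ dvd_n) // muln_gt0 !prime_gt0.
have [k def_n] := dvdnP (pdiv_dvd n).
have k_neq1 : k != 1%N.
  by apply: contraNneq n_nprime => k1; rewrite def_n k1 mul1n pdiv_prime.
wlog r_p : p q pr_p pr_q dvd_n / pdiv n = p.
  move=> IH; have := dvdn_trans (pdiv_dvd n) dvd_n.
  rewrite Euclid_dvdM ?pdiv_prime // !dvdn_prime2 ?pdiv_prime // => /orP[] /eqP r.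
    exact: IH.
  by rewrite mulnC; apply: IH; rewrite // mulnC.
have : k %| q by rewrite -(dvdn_pmul2r (prime_gt0 pr_p)) -{1}r_p -def_n mulnC.
by move/(prime_nt_dvdP pr_q k_neq1) => k_q; rewrite def_n k_q r_p mulnC.
Qed.

Section CycleFacts.
Variable gT : finGroupType.
Implicit Types (a g x y z : gT) (H : {group gT}).

Lemma mem_cycle_trans x y z : x \in <[y]> -> y \in <[z]> -> x \in <[z]>.
Proof. by move=> xy; rewrite -cycle_subG => /subsetP; apply. Qed.

Lemma cycle_eq_of_card_pq p q H x : prime p -> prime q -> #|H| = (p * q)%N -> x \in H ->
  #[x] != 1%N -> ~~ prime #[x] -> <[x]> = H.
Proof.
move=> pr_p pr_q oH xH x_neq1 x_nprime.
have oxH : #[x] = #|H|.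
  by rewrite oH; apply: dvdn_mul_primes_nonprime; rewrite // -oH order_dvdG.
by apply/eqP; rewrite eqEcard cycle_subG xH -orderE oxH leqnn.
Qed.

Lemma cycleM_coprime_mem g a : commute g a -> coprime #[g] #[a] ->
  g \in <[g * a]> /\ a \in <[g * a]>.
Proof.
move=> cga cop; split; rewrite -cycle_subG; first exact: cycleMsub.
by rewrite cga cycleMsub // coprime_sym.
Qed.

(* Raising to the power #[a] kills the a-component and is a bijection on <[y]>. *)
Lemma mem_cycleM_coprime g a y : commute g a -> coprime #[a] #[y] ->
  y \in <[g * a]> -> y \in <[g]>.
Proof.
move=> cga cop /cycleP[k def_y].
have ya_g : y ^+ #[a] \in <[g]>.
  by rewrite def_y -expgM mulnC expgM expgMn // expg_order mulg1 -expgM mem_cycle.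
have /eqP gen_y : generator <[y]> (y ^+ #[a]) by rewrite generator_coprime coprime_sym.
by rewrite -cycle_subG gen_y cycle_subG.
Qed.

Lemma mem_cycle_prime_gen x y : prime #[y] -> x \in <[y]> -> x != 1 -> y \in <[x]>.
Proof.
move=> pr_y xy x_neq1; rewrite -cycle_subG; apply: prime_meetG; first by rewrite -orderE.
by apply/trivgPn; exists x; rewrite // inE xy cycle_id.
Qed.

End CycleFacts.

Section DifferenceGraph.
Variables (gT : finGroupType) (G : {group gT}).
Implicit Types x y z : gT.

Lemma D_adjP x y :
  reflect [/\ x \in G, y \in G, x \notin <[y]>, y \notin <[x]> & <[x]> :&: <[y]> != 1]
          (D_adj G x y).
Proof.
rewrite /D_adj /ipg_adj /pg_adj; apply: (iffP idP).
  case/andP=> /and4P[xG yG neq meet]; rewrite xG yG neq /= negb_or => /andP[nxy nyx].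
  have x_neq1 : x != 1 by apply: contraNneq nxy => ->; apply: group1.
  have y_neq1 : y != 1 by apply: contraNneq nyx => ->; apply: group1.
  by move: meet; rewrite (negbTE x_neq1) (negbTE y_neq1).
case=> xG yG nxy nyx meet.
have -> : x != y by apply: contraNneq nxy => ->; apply: cycle_id.
by rewrite xG yG (negbTE nxy) (negbTE nyx) meet !orbT.
Qed.

Lemma D_adjI x y z : x \in G -> y \in G -> x \notin <[y]> -> y \notin <[x]> ->
  z \in <[x]> -> z \in <[y]> -> z != 1 -> D_adj G x y.
Proof.
move=> xG yG nxy nyx zx zy z_neq1; apply/D_adjP; split=> //.
by apply/trivgPn; exists z; rewrite // inE zx.
Qed.

Lemma D_adj_sym : symmetric (D_adj G).
Proof. by move=> x y; apply/D_adjP/D_adjP=> -[? ? ? ? meet]; split; rewrite // setIC. Qed.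

Lemma D_adj_order x y : D_adj G x y -> #[x] != 1%N /\ ~~ prime #[x].
Proof.
case/D_adjP=> _ _ nxy _ meet; split.
  by rewrite order_eq1; apply: contraNneq nxy => ->; apply: group1.
by apply: contra nxy; rewrite orderE => /prime_meetG/(_ meet); rewrite cycle_subG.
Qed.

Lemma D_vert_isog_Zp_pq p q : prime p -> prime q -> G \isog Zp (p * q) -> D_vert G = set0.
Proof.
move=> pr_p pr_q isoG; apply/setP=> x; rewrite inE in_set0.
apply/negP=> /andP[xG /existsP[y xy]].
have [x_neq1 x_nprime] := D_adj_order xy.
have oG : #|G| = (p * q)%N by rewrite (card_isog isoG) card_Zp // muln_gt0 !prime_gt0.
case/D_adjP: xy => _ yG _ + _.
by rewrite (cycle_eq_of_card_pq pr_p pr_q oG xG x_neq1 x_nprime) yG.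
Qed.

End DifferenceGraph.

Section Within2.
Variables (T : Type) (e : rel T).
Hypothesis e_sym : symmetric e.

Definition within2 x y := e x y \/ exists2 w, e x w & e w y.

Lemma within2_path x y c : within2 x c -> within2 y c ->
  exists s, [/\ size s <= 4, path e x s & last x s = y].
Proof.
have e_c z : e z c -> e c z by rewrite e_sym.
case=> [xc | [u xu uc]] [yc | [v yv vc]].
- by exists [:: c; y]; rewrite /= xc e_c.
- by exists [:: c; v; y]; rewrite /= xc e_c // e_sym yv.
- by exists [:: u; c; y]; rewrite /= xu uc e_c.
- by exists [:: u; c; v; y]; rewrite /= xu uc e_c // e_sym yv.
Qed.

End Within2.

Section CentralPrimePair.
Variables (gT : finGroupType) (G : {group gT}).

Definition central_prime_pair (a b : gT) :=
  [&& a \in 'Z(G), b \in 'Z(G), prime #[a], prime #[b] & #[a] != #[b]].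

Lemma center_commute a g : a \in 'Z(G) -> g \in G -> commute g a.
Proof. by case/centerP=> _ cGa /cGa/commute_sym. Qed.

Lemma central_prime_pair_commute a b : central_prime_pair a b -> commute a b.
Proof.
by case/and5P=> aZ bZ _ _ _; apply: center_commute bZ (subsetP (center_sub G) a aZ).
Qed.

Lemma central_prime_pair_coprime a b : central_prime_pair a b -> coprime #[a] #[b].
Proof. by case/and5P=> _ _ pr_a pr_b ab_neq; rewrite prime_coprime // dvdn_prime2. Qed.

Lemma central_prime_pairC a b : central_prime_pair a b -> central_prime_pair b a.
Proof. by case/and5P=> *; apply/and5P; split; rewrite // eq_sym. Qed.

Lemma central_prime_pair_exists :
  2 <= size (primes #|'Z(G)|) -> exists a b, central_prime_pair a b.
Proof.
have central_of r : r \in primes #|'Z(G)| -> exists2 a, a \in 'Z(G) & #[a] = r /\ prime r.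
  by rewrite mem_primes => /and3P[pr_r _ /(Cauchy pr_r)[a aZ oa]]; exists a.
move: (primes_uniq #|'Z(G)|) central_of.
case: (primes #|'Z(G)|) => [|p [|q s]] //= /andP[+ _] central_of _.
rewrite inE negb_or => /andP[p_neq_q _].
have [a aZ [oa pr_p]] := central_of p (mem_head _ _).
have [b bZ [ob pr_q]] : exists2 b, b \in 'Z(G) & #[b] = q /\ prime q.
  by apply: central_of; rewrite inE mem_head orbT.
by exists a, b; rewrite /central_prime_pair aZ bZ oa ob pr_p pr_q.
Qed.

End CentralPrimePair.

Section Hub.
Variables (gT : finGroupType) (G : {group gT}) (a b : gT).
Hypothesis ab : central_prime_pair G a b.

Let aZ : a \in 'Z(G). Proof. by case/and5P: ab. Qed.
Let bZ : b \in 'Z(G). Proof. by case/and5P: ab. Qed.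
Let pr_a : prime #[a]. Proof. by case/and5P: ab. Qed.
Let pr_b : prime #[b]. Proof. by case/and5P: ab. Qed.
Let cop_ab : coprime #[a] #[b] := central_prime_pair_coprime ab.

Let aG : a \in G. Proof. exact: subsetP (center_sub G) a aZ. Qed.
Let bG : b \in G. Proof. exact: subsetP (center_sub G) b bZ. Qed.
Let abG : a * b \in G. Proof. by rewrite groupM. Qed.
Let centA g : g \in G -> commute g a := center_commute aZ.
Let centB g : g \in G -> commute g b := center_commute bZ.
Let a_neq1 : a != 1. Proof. by rewrite -order_eq1; apply: contraTneq pr_a => ->. Qed.
Let b_neq1 : b != 1. Proof. by rewrite -order_eq1; apply: contraTneq pr_b => ->. Qed.
Let a_ab : a \in <[a * b]>. Proof. by case: (cycleM_coprime_mem (centB aG) cop_ab). Qed.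
Let b_ab : b \in <[a * b]>. Proof. by case: (cycleM_coprime_mem (centB aG) cop_ab). Qed.
Let o_ab : #[a * b] = (#[a] * #[b])%N. Proof. exact: orderM (centB aG) cop_ab. Qed.

Lemma hub_cyclic_isog_Zp_pq : G \subset <[a * b]> ->
  exists p q : nat, [/\ prime p, prime q & G \isog Zp (p * q)].
Proof.
move=> sGab; exists #[a], #[b]; split=> //.
have -> : G = <[a * b]>%G by apply/val_inj/eqP; rewrite eqEsubset sGab cycle_subG.
by rewrite isog_sym -o_ab Zp_isog.
Qed.

Lemma hub_adj u : u \in G -> a \in <[u]> -> b \notin <[u]> -> u \notin <[a * b]> ->
  D_adj G u (a * b).
Proof.
move=> uG au bu u_ab; apply: (D_adjI uG abG u_ab _ au a_ab a_neq1).
by apply: contra bu; apply: mem_cycle_trans.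
Qed.

Lemma hub_adj_vertex x y : D_adj G x y -> a \in <[x]> -> b \notin <[x]> ->
  D_adj G x (a * b).
Proof.
move=> xy ax bx; have [x_neq1 x_nprime] := D_adj_order xy.
case/D_adjP: xy => xG _ _ _ _; apply: hub_adj => //; apply: contra bx => x_ab.
by rewrite (cycle_eq_of_card_pq pr_a pr_b _ x_ab x_neq1 x_nprime) // -orderE.
Qed.

Lemma hub_within2_prime x y g : D_adj G x y -> a \notin <[x]> -> b \notin <[x]> ->
  g \in <[x]> -> prime #[g] -> #[g] != #[a] -> within2 (D_adj G) x (a * b).
Proof.
move=> xy ax bx gx pr_g g_neq_a.
have [x_neq1 x_nprime] := D_adj_order xy.
case/D_adjP: xy => xG _ _ _ _.
have gG : g \in G by apply: (subsetP _ _ gx); rewrite cycle_subG.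
have cga := centA gG.
have cop_ga : coprime #[g] #[a] by rewrite prime_coprime // dvdn_prime2.
have [g_ga a_ga] := cycleM_coprime_mem cga cop_ga.
have gaG : g * a \in G by rewrite groupM.
have g_neq1 : g != 1 by rewrite -order_eq1; apply: contraTneq pr_g => ->.
have b_ga : b \notin <[g * a]>.
  apply: contra bx => b_ga; apply: mem_cycle_trans gx.
  exact: mem_cycleM_coprime cga cop_ab b_ga.
right; exists (g * a).
- apply: (D_adjI xG gaG _ _ gx g_ga g_neq1).
    apply: contra ax => x_ga; have o_ga : #|<[g * a]>| = (#[g] * #[a])%N.
      by rewrite -orderE orderM.
    by rewrite (cycle_eq_of_card_pq pr_g pr_a o_ga x_ga x_neq1 x_nprime).
  by apply: contra ax; apply: mem_cycle_trans.
- apply: (hub_adj gaG a_ga b_ga); apply: contra bx => ga_ab.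
  have g_ba : g \in <[b * a]> by rewrite -(centB aG); apply: mem_cycle_trans g_ga ga_ab.
  have g_b : g \in <[b]>.
    apply: mem_cycleM_coprime g_ba; first exact/commute_sym/centB.
    by rewrite prime_coprime // dvdn_prime2 // eq_sym.
  exact: mem_cycle_trans (mem_cycle_prime_gen pr_b g_b g_neq1) gx.
Qed.

Lemma hub_link_coprime x h : x \in G -> a \in <[x]> -> b \in <[x]> ->
  h \in G -> h \notin <[x]> -> coprime #[h] #[a] ->
  exists2 w, D_adj G x w & D_adj G w (a * b).
Proof.
move=> xG ax bx hG hx cop_ha.
have cha := centA hG.
have a_h : a \notin <[h]>.
  apply: contraL cop_ha => ah; rewrite coprime_sym prime_coprime // negbK.
  by rewrite [#[h]]orderE order_dvdG.
have h_ab : h \notin <[a * b]>.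
  apply: contra hx => h_ab; apply: mem_cycle_trans bx.
  apply: (mem_cycleM_coprime (commute_sym (centB aG))); first by rewrite coprime_sym.
  by rewrite -(centB aG).
have [b_h | b_h] := boolP (b \in <[h]>).
  exists h.
    apply: (D_adjI xG hG _ hx bx b_h b_neq1).
    by apply: contra a_h; apply: mem_cycle_trans.
  apply: (D_adjI hG abG h_ab _ b_h b_ab b_neq1).
  by apply: contra a_h; apply: mem_cycle_trans.
have [h_ha a_ha] := cycleM_coprime_mem cha cop_ha.
have haG : h * a \in G by rewrite groupM.
have b_ha : b \notin <[h * a]> by apply: contra b_h; apply: mem_cycleM_coprime.
exists (h * a).
  apply: (D_adjI xG haG _ _ ax a_ha a_neq1).
    by apply: contra b_ha; apply: mem_cycle_trans.
  by apply: contra hx; apply: mem_cycle_trans.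
by apply: (hub_adj haG a_ha b_ha); apply: contra h_ab; apply: mem_cycle_trans.
Qed.

End Hub.

Section HubDistance.
Variables (gT : finGroupType) (G : {group gT}) (a b : gT).
Hypothesis ab : central_prime_pair G a b.

Let ba : central_prime_pair G b a := central_prime_pairC ab.
Let mul_ba : b * a = a * b := esym (central_prime_pair_commute ab).

Lemma hub_link_outside x y : x \in G -> a \in <[x]> -> b \in <[x]> ->
  y \in G -> y \notin <[x]> -> exists2 w, D_adj G x w & D_adj G w (a * b).
Proof.
move=> xG ax bx yG yx.
have [pr_a pr_b ab_neq] : [/\ prime #[a], prime #[b] & #[a] != #[b]].
  by case/and5P: ab.
have y_G z : z \in <[y]> -> z \in G by apply: subsetP; rewrite cycle_subG.
have [y_p'x | y_p'x] := boolP (y.`_#[a]^' \in <[x]>); last first.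
  apply: hub_link_coprime y_p'x _ => //; first exact/y_G/cycle_constt.
  by apply: pnat_coprime (p_elt_constt _ _) _; rewrite pnatNK pnat_id.
have y_px : y.`_#[a] \notin <[x]>.
  by apply: contra yx => y_px; rewrite -(consttC #[a] y) groupM.
rewrite -mul_ba; apply: (hub_link_coprime ba) y_px _ => //; first exact/y_G/cycle_constt.
by apply: pnat_coprime (p_elt_constt _ _) _; rewrite pnatE // !inE eq_sym.
Qed.

Lemma D_vert_within2_hub x : x \in D_vert G -> within2 (D_adj G) x (a * b).
Proof.
rewrite inE => /andP[xG /existsP[y xy]].
have [x_neq1 _] := D_adj_order xy.
case/D_adjP: (xy) => _ yG _ yx _.
have [ax | ax] := boolP (a \in <[x]>); have [bx | bx] := boolP (b \in <[x]>).
- by have [w] := hub_link_outside xG ax bx yG yx; right; exists w.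
- by left; apply: hub_adj_vertex xy ax bx.
- by left; rewrite -mul_ba; apply: (hub_adj_vertex ba xy).
have x_gt1 : 1 < #[x] by rewrite ltn_neqAle eq_sym x_neq1 orderE cardG_gt0.
have [g gx og] := Cauchy (pdiv_prime x_gt1) (pdiv_dvd #[x]).
have pr_g : prime #[g] by rewrite og pdiv_prime.
have [ga | ga] := eqVneq #[g] #[a].
  rewrite -mul_ba; apply: (hub_within2_prime ba xy) gx pr_g _ => //.
  by case/and5P: ab => _ _ _ _; rewrite ga eq_sym.
exact: hub_within2_prime xy ax bx gx pr_g ga.
Qed.

Lemma hub_D_vert : ~~ (G \subset <[a * b]>) -> a * b \in D_vert G.
Proof.
case/subsetPn=> y yG y_ab.
have abG : a * b \in G.
  by case/and5P: ab => aZ bZ _ _ _; rewrite groupM // (subsetP (center_sub G)).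
have [a_ab b_ab] := cycleM_coprime_mem (central_prime_pair_commute ab)
                                       (central_prime_pair_coprime ab).
have [w abw _] := hub_link_outside abG a_ab b_ab yG y_ab.
by rewrite inE abG; apply/existsP; exists w.
Qed.

End HubDistance.

Theorem theorem4p1 (gT : finGroupType) (G : {group gT}) :
  2 <= size (primes #|'Z(G)|) ->
  (D_connected G <->
     ~ (exists p q : nat, [/\ prime p, prime q & G \isog Zp (p * q)]))
  /\ (D_connected G -> D_diam_le G 6).
Proof.
case/central_prime_pair_exists=> a [b ab].
have diam4 x y : x \in D_vert G -> y \in D_vert G ->
    exists s, [/\ size s <= 4, path (D_adj G) x s & last x s = y].
  move=> /(D_vert_within2_hub ab) xc /(D_vert_within2_hub ab) yc.
  exact (within2_path (@D_adj_sym _ G) xc yc).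
split; [split|].
- case/andP=> /set0Pn[x xD] _ [p [q [pr_p pr_q isoG]]].
  by rewrite (D_vert_isog_Zp_pq pr_p pr_q isoG) inE in xD.
- move=> not_Zpq; have abD : a * b \in D_vert G.
    by apply: (hub_D_vert ab); apply/negP => /(hub_cyclic_isog_Zp_pq ab).
  apply/andP; split; first by apply/set0Pn; exists (a * b).
  apply/forall_inP=> x xD; apply/forall_inP=> y yD.
  by have [s [_ xs <-]] := diam4 x y xD yD; apply/connectP; exists s.
- move=> _ x y xD yD; have [s [s4 xs <-]] := diam4 x y xD yD.
  by exists s; split=> //; apply: leq_trans s4 _.
Qed.
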